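(* For circuits $f,g:a\to b$, we have $[\![f]\!]=[\![g]\!]$ in $\mathbf{Poly}_{\mathbb{Z}_2}$ if and only if $f$ and $g$ are equal modulo $A$ (i.e. related by the smallest congruence for composition and tensor containing the equations $A$).
   Context: A circuit is a morphism of the free symmetric strict monoidal category whose objects are natural numbers (tensor = addition) generated by $\mathsf{discard}:1\to 0$, $\mathsf{copy}:1\to 2$, $\mathsf{zero}:0\to1$, $\mathsf{add}:2\to1$, $\mathsf{one}:0\to 1$, $\mathsf{and}:2\to 1$. Composition is diagrammatic ($f;g$ = first $f$ then $g$), $\sigma$ is the symmetry $2\to2$, and $\mathsf{copy}_n$, $\mathsf{discard}_n$ are the evident composites. $A$ is the set of equations: $\mathsf{copy};\sigma=\mathsf{copy}$; $\mathsf{copy};(\mathsf{copy}\otimes \mathrm{id}_1)=\mathsf{copy};(\mathrm{id}_1\otimes\mathsf{copy})$; $\mathsf{copy};(\mathsf{discard}\otimes\mathrm{id}_1)=\mathrm{id}_1$; for every circuit $f:a\to b$, $f;\mathsf{copy}_b=\mathsf{copy}_a;(f\otimes f)$ and $f;\mathsf{discard}_b=\mathsf{discard}_a$; commutativity, associativity and unit laws for $(\mathsf{add},\mathsf{zero})$ and for $(\mathsf{and},\mathsf{one})$ (e.g. $\sigma;\mathsf{add}=\mathsf{add}$, $(\mathsf{add}\otimes\mathrm{id}_1);\mathsf{add}=(\mathrm{id}_1\otimes\mathsf{add});\mathsf{add}$, $(\mathsf{zero}\otimes\mathrm{id}_1);\mathsf{add}=\mathrm{id}_1$); $\mathsf{copy};\mathsf{add}=\mathsf{discard};\mathsf{zero}$;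 and distributivity $(\mathrm{id}_1\otimes\mathsf{add});\mathsf{and}=(\mathsf{copy}\otimes\mathrm{id}_2);(\mathrm{id}_1\otimes\sigma\otimes\mathrm{id}_1);(\mathsf{and}\otimes\mathsf{and});\mathsf{add}$. (Notably $A$ does not contain $\mathsf{copy};\mathsf{and}=\mathrm{id}_1$.) $\mathbf{Poly}_{\mathbb{Z}_2}$ has natural numbers as objects and $b$-tuples of polynomials in $\mathbb{Z}_2[x_1,\dots,x_a]$ as morphisms $a\to b$, composed by substitution. $[\![\cdot]\!]$ is the strict symmetric monoidal identity-on-objects interpretation sending $\mathsf{discard}\mapsto\langle\rangle$, $\mathsf{copy}\mapsto\langle x_1,x_1\rangle$, $\mathsf{zero}\mapsto\langle0\rangle$, $\mathsf{add}\mapsto\langle x_1+x_2\rangle$, $\mathsf{one}\mapsto\langle1\rangle$, $\mathsf{and}\mapsto\langle x_1x_2\rangle$. *)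

From HB Require Import structures.
From mathcomp Require Import all_boot all_order all_algebra.
From mathcomp Require Import mpoly.

Set Implicit Arguments.
Unset Strict Implicit.
Unset Printing Implicit Defensive.
Import GRing.Theory.

(* Raw syntax of the free symmetric strict monoidal category (objects  *)
(* = natural numbers, tensor = addition) on the six generators.        *)
(* Morphisms are these terms modulo the SSMC axioms (see [eqA]).       *)
Inductive term : nat -> nat -> Type :=
| Tid      (n : nat)   : term n n
| Tsym     (a b : nat) : term (a + b) (b + a)
| Tdiscard             : term 1 0
| Tcopy                : term 1 2
| Tzero                : term 0 1
| Tadd                 : term 2 1
| Tone                 : term 0 1
| Tand                 : term 2 1
| Tcomp (a b c : nat)  : term a b -> term b c -> term a c
| Ttens (a b c d : nat): term a b -> term c d -> term (a + c) (b + d).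

Arguments Tcomp {a b c}.
Arguments Ttens {a b c d}.

Definition sigma : term 2 2 := Tsym 1 1.

Definition tcast a b a' b' (ea : a = a') (eb : b = b') (t : term a b)
  : term a' b' :=
  let: erefl in _ = a' := ea return term a' b' in
  let: erefl in _ = b' := eb return term a b' in t.

Lemma copy_cod_eq n : 1 + ((n + 1) + n) = (1 + n) + (1 + n).
Proof. rewrite !add1n addn1 addSn addnS. by []. Qed.

Fixpoint copyn (n : nat) : term n (n + n) :=
  match n return term n (n + n) with
  | 0 => Tid 0
  | m.+1 =>
      Tcomp (Ttens Tcopy (copyn m))
      (tcast erefl (copy_cod_eq m) (Ttens (Tid 1) (Ttens (Tsym 1 m) (Tid m))))
  end.

Fixpoint discardn (n : nat) : term n 0 :=
  match n return term n 0 with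
  | 0 => Tid 0
  | m.+1 => Ttens Tdiscard (discardn m)
  end.

Inductive eqA : forall a b, term a b -> term a b -> Prop :=
| eqA_refl a b (f : term a b) : eqA f f
| eqA_sym a b (f g : term a b) : eqA f g -> eqA g f
| eqA_trans a b (f g h : term a b) : eqA f g -> eqA g h -> eqA f h
| eqA_comp a b c (f f' : term a b) (g g' : term b c) :
    eqA f f' -> eqA g g' -> eqA (Tcomp f g) (Tcomp f' g')
| eqA_tens a b c d (f f' : term a b) (g g' : term c d) :
    eqA f f' -> eqA g g' -> eqA (Ttens f g) (Ttens f' g')
| ssmc_compA a b c d (f : term a b) (g : term b c) (h : term c d) :
    eqA (Tcomp (Tcomp f g) h) (Tcomp f (Tcomp g h))
| ssmc_idl a b (f : term a b) : eqA (Tcomp (Tid a) f) f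
| ssmc_idr a b (f : term a b) : eqA (Tcomp f (Tid b)) f
| ssmc_interchange a b c d e k (f : term a b) (g : term c d)
    (h : term b e) (l : term d k) :
    eqA (Tcomp (Ttens f g) (Ttens h l)) (Ttens (Tcomp f h) (Tcomp g l))
| ssmc_tens_id a b : eqA (Ttens (Tid a) (Tid b)) (Tid (a + b))
| ssmc_tensA a b c d e k (f : term a b) (g : term c d) (h : term e k) :
    eqA (tcast (esym (addnA a c e)) (esym (addnA b d k)) (Ttens (Ttens f g) h))
        (Ttens f (Ttens g h))
| ssmc_unitl a b (f : term a b) :
    eqA (tcast (add0n a) (add0n b) (Ttens (Tid 0) f)) f
| ssmc_unitr a b (f : term a b) :
    eqA (tcast (addn0 a) (addn0 b) (Ttens f (Tid 0))) f
| ssmc_sym_inv a b : eqA (Tcomp (Tsym a b) (Tsym b a)) (Tid (a + b))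
| ssmc_sym_nat a b c d (f : term a b) (g : term c d) :
    eqA (Tcomp (Tsym a c) (Ttens g f)) (Tcomp (Ttens f g) (Tsym b d))
| ssmc_sym_hexl a b c :
    eqA (tcast (addnA a b c) (esym (addnA b c a)) (Tsym a (b + c)))
        (Tcomp (Ttens (Tsym a b) (Tid c))
               (tcast (addnA b a c) erefl (Ttens (Tid b) (Tsym a c))))
| ssmc_sym_hexr a b c :
    eqA (tcast (esym (addnA a b c)) (addnA c a b) (Tsym (a + b) c))
        (Tcomp (Ttens (Tid a) (Tsym b c))
               (tcast (esym (addnA a c b)) erefl (Ttens (Tsym a c) (Tid b))))
| ssmc_sym0 a :
    eqA (tcast (addn0 a) (add0n a) (Tsym a 0)) (Tid a)
| A_copy_comm : eqA (Tcomp Tcopy sigma) Tcopy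
| A_copy_assoc :
    eqA (Tcomp Tcopy (Ttens Tcopy (Tid 1))) (Tcomp Tcopy (Ttens (Tid 1) Tcopy))
| A_copy_unit : eqA (Tcomp Tcopy (Ttens Tdiscard (Tid 1))) (Tid 1)
| A_copy_nat a b (f : term a b) :
    eqA (Tcomp f (copyn b)) (Tcomp (copyn a) (Ttens f f))
| A_discard_nat a b (f : term a b) : eqA (Tcomp f (discardn b)) (discardn a)
| A_add_comm : eqA (Tcomp sigma Tadd) Tadd
| A_add_assoc :
    eqA (Tcomp (Ttens Tadd (Tid 1)) Tadd) (Tcomp (Ttens (Tid 1) Tadd) Tadd)
| A_add_unit : eqA (Tcomp (Ttens Tzero (Tid 1)) Tadd) (Tid 1)
| A_and_comm : eqA (Tcomp sigma Tand) Tand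
| A_and_assoc :
    eqA (Tcomp (Ttens Tand (Tid 1)) Tand) (Tcomp (Ttens (Tid 1) Tand) Tand)
| A_and_unit : eqA (Tcomp (Ttens Tone (Tid 1)) Tand) (Tid 1)
| A_copy_add : eqA (Tcomp Tcopy Tadd) (Tcomp Tdiscard Tzero)
| A_distr :
    eqA (Tcomp (Ttens (Tid 1) Tadd) Tand)
        (Tcomp (Tcomp (Tcomp (Ttens Tcopy (Tid 2))
                             (Ttens (Ttens (Tid 1) sigma) (Tid 1)))
                      (Ttens Tand Tand))
               Tadd).

Definition Poly (a b : nat) := b.-tuple {mpoly 'F_2[a]}.

Definition Pid (n : nat) : Poly n n := [tuple 'X_i | i < n].

Definition Pcomp a b c (F : Poly a b) (G : Poly b c) : Poly a c :=
  [tuple comp_mpoly F (tnth G i) | i < c].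

Definition Ptens a b c d (F : Poly a b) (G : Poly c d) : Poly (a + c) (b + d) :=
  [tuple of
     [seq comp_mpoly [tuple 'X_(lshift c j) | j < a] p | p <- F] ++
     [seq comp_mpoly [tuple 'X_(rshift a j) | j < c] p | p <- G]]
  : (b + d).-tuple _.

Definition Psym a b : Poly (a + b) (b + a) :=
  [tuple match split i with
         | inl j => 'X_(rshift a j)
         | inr k => 'X_(lshift b k)
         end | i < b + a].

Definition ord1_2 : 'I_2 := ord_max.

Fixpoint interp a b (t : term a b) : Poly a b :=
  match t in term a b return Poly a b with
  | Tid n => Pid n
  | Tsym a b => Psym a b
  | Tdiscard => [tuple]
  | Tcopy => [tuple 'X_ord0; 'X_ord0]
  | Tzero => [tuple 0%R]
  | Tadd => [tuple ('X_ord0 + 'X_ord1_2)%R]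
  | Tone => [tuple 1%R]
  | Tand => [tuple ('X_ord0 * 'X_ord1_2)%R]
  | Tcomp _ _ _ f g => Pcomp (interp f) (interp g)
  | Ttens _ _ _ _ f g => Ptens (interp f) (interp g)
  end.

(* Soundness: [interp t] is the semantics [sem] of [t] in the polynomial ring
   over F_2, and the semantics in any commutative semiring with 1 + 1 = 0
   validates the axioms of symmetric monoidal categories and the equations A.

   Completeness: the terms a -> 1 modulo A form a commutative ring [qterm a]
   whose sum and product are pairing followed by [add] and [and]; its ring
   axioms are instances of A, and x + x = 0 by [copy ; add = discard ; zero].
   Copy and discard make tupling a cartesian product, so a term f : a -> b is
   determined modulo A by its components f ; proj_i.  The class of f ; proj_i
   is the image of the i-th polynomial of [interp f] under the ring morphism
   F_2[x_1, ..., x_a] -> qterm a sending x_j to the class of proj_j, hence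
   [interp f = interp g] forces f = g modulo A. *)

From Stdlib Require Import Setoid Morphisms.
From Pilot Require Import Defs.
From HB Require Import structures.
From mathcomp Require Import all_boot all_order all_algebra.
From mathcomp Require Import mpoly.
From mathcomp Require Import boolp zify generic_quotient.

Set Implicit Arguments.
Unset Strict Implicit.
Unset Printing Implicit Defensive.
Import GRing.Theory.

Add Parametric Relation a b : (term a b) (@eqA a b)
  reflexivity proved by (@eqA_refl a b)
  symmetry proved by (@eqA_sym a b)
  transitivity proved by (@eqA_trans a b) as eqA_rel.

#[export] Hint Resolve eqA_refl : core.

Add Parametric Morphism a b c : (@Tcomp a b c)
  with signature (@eqA a b) ==> (@eqA b c) ==> (@eqA a c) as Tcomp_eqA.
Proof. by move=> *; apply: eqA_comp. Qed.

Add Parametric Morphism a b c d : (@Ttens a b c d)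
  with signature (@eqA a b) ==> (@eqA c d) ==> (@eqA (a + c) (b + d)) as Ttens_eqA.
Proof. by move=> *; apply: eqA_tens. Qed.

(** * Equality modulo A up to casts *)

(* Needed to state the monoidal axioms, whose two sides have types like
   [term (a + 0) b] and [term a b] that are only propositionally equal. *)
Definition heqA a b a' b' (t : term a b) (u : term a' b') : Prop :=
  exists (ea : a = a') (eb : b = b'), eqA (Defs.tcast ea eb t) u.

Lemma eqA_heqA a b (t u : term a b) : eqA t u -> heqA t u.
Proof. by exists erefl, erefl. Qed.

Lemma heqA_eqA a b (t u : term a b) : heqA t u -> eqA t u.
Proof. by case=> ea [eb]; rewrite (eq_irrelevance ea erefl) (eq_irrelevance eb erefl). Qed.

Lemma heqA_refl a b (t : term a b) : heqA t t.
Proof. exact/eqA_heqA/eqA_refl. Qed.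

Lemma heqA_sym a b a' b' (t : term a b) (u : term a' b') : heqA t u -> heqA u t.
Proof. by case=> ea [eb]; subst => /= /eqA_sym; apply: eqA_heqA. Qed.

Lemma heqA_trans a b a' b' a'' b'' (t : term a b) (u : term a' b') (w : term a'' b'') :
  heqA t u -> heqA u w -> heqA t w.
Proof.
case=> ea [eb]; subst => /= tu [ea [eb]]; subst => /= uw.
exact/eqA_heqA/(eqA_trans tu uw).
Qed.

Lemma heqA_castr a b a' b' (ea : a = a') (eb : b = b') (t : term a b) :
  heqA t (Defs.tcast ea eb t).
Proof. by exists ea, eb; apply: eqA_refl. Qed.

Lemma heqA_castl a b a' b' (ea : a = a') (eb : b = b') (t : term a b) :
  heqA (Defs.tcast ea eb t) t.
Proof. exact/heqA_sym/heqA_castr. Qed.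

Lemma heqA_comp a b c a' b' c' (f : term a b) (g : term b c)
    (f' : term a' b') (g' : term b' c') :
  heqA f f' -> heqA g g' -> heqA (Tcomp f g) (Tcomp f' g').
Proof.
case=> ea [eb]; subst => /= ff' [eb [ec]].
rewrite (eq_irrelevance eb erefl); subst => /= gg'.
exact/eqA_heqA/eqA_comp.
Qed.

Lemma heqA_tens a b c d a' b' c' d' (f : term a b) (g : term c d)
    (f' : term a' b') (g' : term c' d') :
  heqA f f' -> heqA g g' -> heqA (Ttens f g) (Ttens f' g').
Proof.
case=> ea [eb]; subst => /= ff' [ec [ed]]; subst => /= gg'.
exact/eqA_heqA/eqA_tens.
Qed.

Lemma heqA_id a a' : a = a' -> heqA (Tid a) (Tid a').
Proof. by move=> <-; apply: heqA_refl. Qed.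

Lemma Ttens_assoc a b c d e k (f : term a b) (g : term c d) (h : term e k) :
  heqA (Ttens (Ttens f g) h) (Ttens f (Ttens g h)).
Proof. exact: heqA_trans (heqA_castr _ _ _) (eqA_heqA (ssmc_tensA f g h)). Qed.

Lemma Ttens_id0l a b (f : term a b) : eqA (Ttens (Tid 0) f) f.
Proof.
exact/heqA_eqA/(heqA_trans (heqA_castr _ _ _) (eqA_heqA (ssmc_unitl f))).
Qed.

Lemma Ttens_id0r a b (f : term a b) : heqA (Ttens f (Tid 0)) f.
Proof. exact: heqA_trans (heqA_castr _ _ _) (eqA_heqA (ssmc_unitr f)). Qed.

Lemma Tsym0r a : heqA (Tsym a 0) (Tid a).
Proof. exact: heqA_trans (heqA_castr _ _ _) (eqA_heqA (ssmc_sym0 a)). Qed.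

Lemma Tcomp_Tsym0r a b (f : term a (b + 0)) : heqA (Tcomp f (Tsym b 0)) f.
Proof.
apply: heqA_trans (eqA_heqA (ssmc_idr f)).
apply: heqA_comp (heqA_refl f) _.
exact: heqA_trans (Tsym0r b) (heqA_id (esym (addn0 b))).
Qed.

Lemma Tsym0l a : heqA (Tsym 0 a) (Tid a).
Proof.
apply: heqA_trans (eqA_heqA (ssmc_sym_inv 0 a)).
exact/heqA_sym/Tcomp_Tsym0r.
Qed.

Lemma eqA_discardn a (f : term a 0) : eqA f (discardn a).
Proof. by rewrite -(A_discard_nat f) ssmc_idr. Qed.

Lemma eqA_into0 a (f g : term a 0) : eqA f g.
Proof. by rewrite (eqA_discardn f) (eqA_discardn g). Qed.

Lemma copyn1 : eqA (copyn 1) Tcopy.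
Proof.
apply/heqA_eqA; apply: heqA_trans (eqA_heqA (ssmc_idr Tcopy)).
apply: heqA_comp (Ttens_id0r Tcopy) _.
apply: heqA_trans (heqA_castl _ _ _) _.
apply: heqA_trans (eqA_heqA (ssmc_tens_id 1 1)).
apply: heqA_tens (heqA_refl _) _.
exact: heqA_trans (Ttens_id0r _) (Tsym0r 1).
Qed.

Lemma copy_counitl (d : term 1 0) : eqA (Tcomp Tcopy (Ttens d (Tid 1))) (Tid 1).
Proof. by rewrite (eqA_into0 d Tdiscard) A_copy_unit. Qed.

Lemma copy_counitr (d : term 1 0) : eqA (Tcomp Tcopy (Ttens (Tid 1) d)) (Tid 1).
Proof.
rewrite -{1}A_copy_comm ssmc_compA (ssmc_sym_nat d (Tid 1)).
by rewrite (heqA_eqA (Tsym0l 1)) ssmc_idr copy_counitl.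
Qed.

Lemma Ttens0l_comp x p q (d : term x 0) (u : term p q) :
  eqA (Ttens d u) (Tcomp (Ttens d (Tid p)) u).
Proof.
symmetry; apply: eqA_trans (eqA_comp (eqA_refl _) (eqA_sym (Ttens_id0l u))) _.
by rewrite ssmc_interchange ssmc_idr ssmc_idl.
Qed.

Lemma Ttens0r_comp x p q (d : term x 0) (u : term p q) :
  heqA (Ttens u d) (Tcomp (Defs.tcast erefl (addn0 p) (Ttens (Tid p) d)) u).
Proof.
apply/heqA_sym/(heqA_trans (heqA_comp (heqA_castl _ _ _) (heqA_sym (Ttens_id0r u)))).
by apply/eqA_heqA; rewrite ssmc_interchange ssmc_idl ssmc_idr.
Qed.

(** * Projections and tupling *)

Fixpoint proj (n i : nat) : term n 1 :=
  match n with
  | 0 => Tzero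
  | m.+1 => if i is j.+1 then Ttens Tdiscard (proj m j) else Ttens (Tid 1) (discardn m)
  end.

Fixpoint tupling (a n : nat) (h : nat -> term a 1) : term a n :=
  match n with
  | 0 => discardn a
  | m.+1 => Tcomp (copyn a) (Ttens (h 0) (@tupling a m (fun i => h i.+1)))
  end.
Arguments tupling : clear implicits.

Lemma comp_tupling a c n (k : term c a) (h : nat -> term a 1) :
  eqA (Tcomp k (tupling a n h)) (tupling c n (fun i => Tcomp k (h i))).
Proof.
elim: n h => [|n IH] h /=; first exact: A_discard_nat.
rewrite -[n.+1]/(1 + n). (* the index [ssmc_interchange] produces *)
by rewrite -ssmc_compA A_copy_nat ssmc_compA ssmc_interchange IH.
Qed.

Lemma eq_tupling a n (h h' : nat -> term a 1) :
  (forall i, i < n -> eqA (h i) (h' i)) -> eqA (tupling a n h) (tupling a n h').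
Proof.
elim: n h h' => [|n IH] h h' hh' //=.
by rewrite (hh' 0) // (IH _ (fun i => h' i.+1)) // => i; apply: (hh' i.+1).
Qed.

Lemma copyn_discardr a (g : term a 1) (d : term a 0) :
  eqA (Tcomp (copyn a) (Ttens g d)) g.
Proof.
have -> : eqA (Ttens g d) (Tcomp (Ttens g g) (Ttens (Tid 1) Tdiscard)).
  by rewrite ssmc_interchange ssmc_idr (eqA_into0 (Tcomp g Tdiscard) d).
by rewrite -ssmc_compA -A_copy_nat ssmc_compA copyn1 copy_counitr ssmc_idr.
Qed.

Lemma copyn_discardl a (g : term a 1) (d : term a 0) :
  eqA (Tcomp (copyn a) (Ttens d g)) g.
Proof.
have -> : eqA (Ttens d g) (Tcomp (Ttens g g) (Ttens Tdiscard (Tid 1))).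
  by rewrite ssmc_interchange ssmc_idr (eqA_into0 (Tcomp g Tdiscard) d).
by rewrite -ssmc_compA -A_copy_nat ssmc_compA copyn1 copy_counitl ssmc_idr.
Qed.

Lemma tupling_proj a n (h : nat -> term a 1) i :
  i < n -> eqA (Tcomp (tupling a n h) (proj n i)) (h i).
Proof.
elim: n h i => [|n IH] h [|i] //= lt_in; set t := tupling a n _.
  rewrite ssmc_compA (ssmc_interchange (h 0) t (Tid 1) (discardn n)).
  by rewrite ssmc_idr copyn_discardr.
rewrite ssmc_compA (ssmc_interchange (h 0) t Tdiscard (proj n i)).
by rewrite IH // copyn_discardl.
Qed.

Definition copyn_shuffle m : term (1 + (1 + m + m)) ((1 + m) + (1 + m)) :=
  Defs.tcast erefl (copy_cod_eq m) (Ttens (Tid 1) (Ttens (Tsym 1 m) (Tid m))).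

Lemma copynS m : copyn m.+1 = Tcomp (Ttens Tcopy (copyn m)) (copyn_shuffle m).
Proof. by []. Qed.

Lemma copyn_shuffle_tens m x z (X : term 1 x) (Z : term 1 z) :
  heqA (Tcomp (copyn_shuffle m) (Ttens (Ttens X (discardn m)) (Ttens Z (Tid m))))
       (Ttens (Ttens X Z) (Ttens (discardn m) (Tid m))).
Proof.
set D := discardn m.
apply: (heqA_trans (u := Tcomp (Ttens (Tid 1) (Ttens (Tsym 1 m) (Tid m)))
                                (Ttens X (Ttens (Ttens D Z) (Tid m))))).
  apply: heqA_comp; first exact: heqA_castl.
  apply: heqA_trans (Ttens_assoc X D (Ttens Z (Tid m))) _.
  exact/heqA_tens/heqA_sym/Ttens_assoc/heqA_refl.
apply: (heqA_trans (u := Ttens X (Ttens (Tcomp (Ttens Z D) (Tsym z 0)) (Tid m)))).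
  apply/eqA_heqA.
  rewrite ssmc_interchange ssmc_idl (ssmc_interchange (Tsym 1 m)) ssmc_idl.
  by rewrite ssmc_sym_nat.
apply: heqA_trans (heqA_tens (heqA_refl X) (heqA_tens (Tcomp_Tsym0r _) (heqA_refl _))) _.
apply: heqA_trans (heqA_tens (heqA_refl X) (Ttens_assoc Z D (Tid m))) _.
exact/heqA_sym/Ttens_assoc.
Qed.

Lemma copyn_counitl m : eqA (Tcomp (copyn m) (Ttens (discardn m) (Tid m))) (Tid m).
Proof.
elim: m => [|m IH]; first by rewrite ssmc_idl ssmc_tens_id.
apply/heqA_eqA; rewrite copynS.
have id_split : heqA (Tid m.+1) (Ttens (Tid 1) (Tid m)).
  exact/eqA_heqA/eqA_sym/(ssmc_tens_id 1 m).
apply: heqA_trans (heqA_comp (heqA_refl _) (heqA_tens (heqA_refl _) id_split)) _.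
apply: heqA_trans (eqA_heqA (ssmc_compA _ _ _)) _.
apply: heqA_trans (heqA_comp (heqA_refl _) (copyn_shuffle_tens m Tdiscard (Tid 1))) _.
apply/eqA_heqA.
by rewrite (ssmc_interchange Tcopy (copyn m)) A_copy_unit IH ssmc_tens_id.
Qed.

Lemma copyn_split_head m :
  eqA (Tcomp (copyn m.+1) (Ttens (Ttens (Tid 1) (discardn m)) (Ttens Tdiscard (Tid m))))
      (Tid m.+1).
Proof.
apply/heqA_eqA; rewrite copynS.
apply: heqA_trans (eqA_heqA (ssmc_compA _ _ _)) _.
apply: heqA_trans (heqA_comp (heqA_refl _) (copyn_shuffle_tens m (Tid 1) Tdiscard)) _.
apply/eqA_heqA.
by rewrite (ssmc_interchange Tcopy (copyn m)) copy_counitr copyn_counitl ssmc_tens_id.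
Qed.

Lemma tupling_proj_id n : eqA (tupling n n (proj n)) (Tid n).
Proof.
elim: n => [|n IH] //=.
have -> : eqA (tupling n.+1 n (fun i => Ttens Tdiscard (proj n i))) (Ttens Tdiscard (Tid n)).
  rewrite (eq_tupling (h' := fun i => Tcomp (Ttens Tdiscard (Tid n)) (proj n i))).
    by rewrite -comp_tupling IH ssmc_idr.
  by move=> i _; apply: Ttens0l_comp.
exact: copyn_split_head.
Qed.

Lemma tupling_eta a n (x : term a n) :
  eqA x (tupling a n (fun i => Tcomp x (proj n i))).
Proof. by rewrite -comp_tupling tupling_proj_id ssmc_idr. Qed.

Definition pair2 a (u v : term a 1) : term a 2 :=
  tupling a 2 (fun i => if i is 0 then u else v).

Add Parametric Morphism a : (@pair2 a)
  with signature (@eqA a 1) ==> (@eqA a 1) ==> (@eqA a 2) as pair2_eqA.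
Proof. by move=> u u' uu' v v' vv'; apply: eq_tupling => -[|i]. Qed.

Lemma comp_pair2 c a (k : term c a) (u v : term a 1) :
  eqA (Tcomp k (pair2 u v)) (pair2 (Tcomp k u) (Tcomp k v)).
Proof. by rewrite comp_tupling; apply: eq_tupling => -[|i]. Qed.

Lemma proj10 : eqA (proj 1 0) (Tid 1).
Proof. exact: heqA_eqA (Ttens_id0r (Tid 1)). Qed.

Lemma pair2_proj : eqA (pair2 (proj 2 0) (proj 2 1)) (Tid 2).
Proof. by rewrite -(tupling_proj_id 2); apply: eq_tupling => -[|[|i]]. Qed.

Definition lproj x y : term (x + y) x :=
  Defs.tcast erefl (addn0 x) (Ttens (Tid x) (discardn y)).
Definition rproj x y : term (x + y) y := Ttens (discardn x) (Tid y).

Lemma proj_addr x y j : eqA (proj (x + y) (x + j)) (Ttens (discardn x) (proj y j)).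
Proof.
elim: x => [|x IH]; first by rewrite Ttens_id0l.
apply/heqA_eqA; apply: heqA_trans (eqA_heqA (eqA_tens (eqA_refl Tdiscard) IH)) _.
exact: heqA_sym (Ttens_assoc Tdiscard (discardn x) (proj y j)).
Qed.

Lemma proj_addl x y i : i < x -> heqA (proj (x + y) i) (Ttens (proj x i) (discardn y)).
Proof.
elim: x i => [|x IH] [|i] //= lt_ix.
  apply: heqA_sym (heqA_trans (Ttens_assoc (Tid 1) (discardn x) (discardn y)) _).
  by apply/eqA_heqA; rewrite (eqA_into0 (Ttens (discardn x) (discardn y)) (discardn (x + y))).
apply: heqA_trans (heqA_tens (heqA_refl Tdiscard) (IH i lt_ix)) _.
exact: heqA_sym (Ttens_assoc Tdiscard (proj x i) (discardn y)).
Qed.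

Lemma lproj_proj x y i : i < x -> eqA (Tcomp (lproj x y) (proj x i)) (proj (x + y) i).
Proof.
move=> lt_ix; apply/heqA_eqA/heqA_sym.
exact: heqA_trans (proj_addl y lt_ix) (Ttens0r_comp _ _).
Qed.

Lemma rproj_proj x y j : eqA (Tcomp (rproj x y) (proj y j)) (proj (x + y) (x + j)).
Proof. by rewrite proj_addr Ttens0l_comp. Qed.

Lemma Ttens_proj_l a b c d (f : term a b) (g : term c d) i : i < b ->
  eqA (Tcomp (Ttens f g) (proj (b + d) i)) (Tcomp (lproj a c) (Tcomp f (proj b i))).
Proof.
move=> lt_ib; apply/heqA_eqA.
apply: heqA_trans (heqA_comp (heqA_refl _) (proj_addl d lt_ib)) _.
apply: heqA_trans (eqA_heqA (ssmc_interchange f g (proj b i) (discardn d))) _.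
have g_discard := eqA_into0 (Tcomp g (discardn d)) (discardn c).
exact: heqA_trans (eqA_heqA (eqA_tens (eqA_refl _) g_discard)) (Ttens0r_comp _ _).
Qed.

Lemma Ttens_proj_r a b c d (f : term a b) (g : term c d) j :
  eqA (Tcomp (Ttens f g) (proj (b + d) (b + j))) (Tcomp (rproj a c) (Tcomp g (proj d j))).
Proof.
rewrite proj_addr (ssmc_interchange f g (discardn b) (proj d j)).
by rewrite (eqA_into0 (Tcomp f (discardn b)) (discardn a)) Ttens0l_comp.
Qed.

Lemma Tsym_proj_l a b i : i < b ->
  eqA (Tcomp (Tsym a b) (proj (b + a) i)) (proj (a + b) (a + i)).
Proof.
move=> lt_ib; apply/heqA_eqA.
apply: heqA_trans (heqA_comp (heqA_refl _) (proj_addl a lt_ib)) _.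
apply: heqA_trans (eqA_heqA (ssmc_sym_nat (discardn a) (proj b i))) _.
apply/eqA_heqA.
by rewrite (heqA_eqA (Tsym0l 1)) ssmc_idr proj_addr.
Qed.

Lemma Tsym_proj_r a b j : j < a ->
  eqA (Tcomp (Tsym a b) (proj (b + a) (b + j))) (proj (a + b) j).
Proof.
move=> lt_ja; apply/heqA_eqA.
apply: heqA_trans (eqA_heqA (eqA_comp (eqA_refl _) (proj_addr b a j))) _.
apply: heqA_trans (eqA_heqA (ssmc_sym_nat (proj a j) (discardn b))) _.
exact: heqA_trans (Tcomp_Tsym0r _) (heqA_sym (proj_addl b lt_ja)).
Qed.

(** * Semantics *)

Section Semantics.
Variables (T : Type) (zero one : T) (add mul : T -> T -> T).

(* Inputs and outputs are indexed from 0, the inputs of the right factor of a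
   tensor being shifted by the arity of the left one; [sem t v i] is junk for
   [i >= b], so the lemmas below only speak about [i < b]. *)
Fixpoint sem a b (t : term a b) (v : nat -> T) : nat -> T :=
  match t with
  | Tid _ => v
  | Tsym a b => fun i => if i < b then v (a + i) else v (i - b)
  | Tdiscard => fun _ => zero
  | Tcopy => fun _ => v 0
  | Tzero => fun _ => zero
  | Tadd => fun _ => add (v 0) (v 1)
  | Tone => fun _ => one
  | Tand => fun _ => mul (v 0) (v 1)
  | Tcomp _ _ _ f g => sem g (sem f v)
  | Ttens a b _ _ f g => fun i =>
      if i < b then sem f v i else sem g (fun j => v (a + j)) (i - b)
  end.

Lemma eq_sem a b (t : term a b) v w : v =1 w -> sem t v =1 sem t w.
Proof.
elim: t v w => [n|a' b'|||||||a' b' c f IHf g IHg|a' b' c d f IHf g IHg] v w vw i /=;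
  rewrite ?vw //; first exact/IHg/IHf.
by rewrite (IHf v w vw) (IHg (fun j => v (a' + j)) (fun j => w (a' + j))).
Qed.

Lemma sem_loc a b (t : term a b) v w : (forall j, j < a -> v j = w j) ->
  forall i, i < b -> sem t v i = sem t w i.
Proof.
elim: t v w => [n|a' b'|||||||a' b' c f IHf g IHg|a' b' c d f IHf g IHg] v w vw i lt_i /=;
  try by rewrite ?vw.
- by case: ltnP => ?; apply: vw; lia.
- by apply: IHg => // j lt_jb; apply: IHf.
case: ltnP => ?; first by apply: IHf => // j lt_ja; apply: vw; lia.
by apply: IHg => [j lt_jc|]; [apply: vw | ]; lia.
Qed.

Lemma sem_tcast a b a' b' (ea : a = a') (eb : b = b') (t : term a b) v :
  sem (Defs.tcast ea eb t) v = sem t v.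
Proof. by subst. Qed.

Lemma sem_copyn n v i : sem (copyn n) v i = if i < n then v i else v (i - n).
Proof.
elim: n v i => [|n IH] v i; first by rewrite /= subn0.
rewrite copynS /= /copyn_shuffle sem_tcast /=.
by do ![case: ifP => ? /=]; rewrite ?IH; do ?[case: ifP => ?]; try congr v; lia.
Qed.

End Semantics.

Section SemanticsMorphism.
Variables (T T' : Type) (zero one : T) (add mul : T -> T -> T).
Variables (zero' one' : T') (add' mul' : T' -> T' -> T') (phi : T -> T').
Hypotheses (phi0 : phi zero = zero') (phi1 : phi one = one').
Hypotheses (phiD : forall x y, phi (add x y) = add' (phi x) (phi y)).
Hypotheses (phiM : forall x y, phi (mul x y) = mul' (phi x) (phi y)).

Lemma sem_morph a b (t : term a b) v i :
  phi (sem zero one add mul t v i) = sem zero' one' add' mul' t (phi \o v) i.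
Proof.
elim: t v i => //= [a' b' v i|a' b' c f IHf g IHg v i|a' b' c d f IHf g IHg v i].
- by case: ifP.
- by rewrite IHg; apply: eq_sem => j; rewrite /= IHf.
- by case: ifP.
Qed.

End SemanticsMorphism.

Section Soundness.
Local Open Scope ring_scope.
Variables (R : comPzSemiRingType) (R2 : 1 + 1 = 0 :> R).
Local Notation semR := (sem (0 : R) 1 +%R *%R).

Local Ltac split_ifs := rewrite ?sem_tcast /= ?sem_tcast /=;
  repeat (case: ifP => ? /=); try (exfalso; lia); try (congr (_ _); lia).

Lemma sem_sound a b (f g : term a b) :
  eqA f g -> forall v i, (i < b)%N -> semR f v i = semR g v i.
Proof.
elim=> {a b f g}; try by move=> * /=; split_ifs.
- by move=> a b f g _ IH v i lt_ib; rewrite IH.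
- by move=> a b f g h _ IH1 _ IH2 v i lt_ib; rewrite IH1 // IH2.
- move=> a b c f f' g g' _ IHf _ IHg v i lt_ic /=; rewrite IHg //.
  by apply: sem_loc => // j lt_jb; apply: IHf.
- move=> a b c d f f' g g' _ IHf _ IHg v i lt_i /=.
  by case: ltnP => ?; [apply: IHf | apply: IHg; lia].
- move=> a b c d e k f g h l v i lt_i /=; case: ltnP => ?.
    by apply: sem_loc => // j lt_jb /=; rewrite lt_jb.
  by apply: eq_sem => j /=; rewrite ifF ?addKn //; lia.
- move=> a b c d e k f g h v i lt_i; split_ifs.
  by rewrite subnDA; apply: eq_sem => j; rewrite addnA.
- move=> a b c d f g v i lt_i /=; case: ltnP => ?.
    rewrite ifF ?addKn; last by lia.
    by apply: sem_loc => // j lt_jc /=; rewrite lt_jc.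
  rewrite ifT; last by lia.
  by apply: sem_loc => [j lt_ja /=|]; [rewrite ifF; [congr v |] | ]; lia.
- move=> a b f v i lt_i /=; rewrite sem_copyn; case: ltnP => ?.
    by apply: sem_loc => // j lt_ja; rewrite sem_copyn lt_ja.
  by apply: sem_loc => [j lt_ja|]; [rewrite sem_copyn ifF; [congr v|] | ]; lia.
- by move=> v i _ /=; rewrite addrC.
- by move=> v i _ /=; rewrite addrA.
- by move=> v [|i] // _ /=; rewrite add0r.
- by move=> v i _ /=; rewrite mulrC.
- by move=> v i _ /=; rewrite mulrA.
- by move=> v [|i] // _ /=; rewrite mul1r.
- by move=> v i _ /=; rewrite -{1 2}[v 0]mulr1 -mulrDr R2 mulr0.
- by move=> v i _ /=; rewrite mulrDr.
Qed.

End Soundness.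

Lemma sem_rmorph (R S : pzSemiRingType) (phi : {rmorphism R -> S}) a b (t : term a b) v i :
  phi (sem 0%R 1%R +%R *%R t v i) = sem 0%R 1%R +%R *%R t (phi \o v) i.
Proof.
by apply: sem_morph; [exact: rmorph0 | exact: rmorph1 | exact: rmorphD | exact: rmorphM].
Qed.

Section CharacteristicTwo.
Local Open Scope ring_scope.
Variables (R : nzRingType) (R2 : 1 + 1 = 0 :> R).

Definition of_F2 (c : 'F_2) : R := (c : nat)%:R.

Lemma of_F2_zmod : zmod_morphism of_F2.
Proof.
have oppr1 : - 1 = 1 :> R by apply/eqP; rewrite eq_sym -addr_eq0 R2.
by case=> [[|[|?]] ?] [[|[|?]] ?] //=; rewrite /of_F2 /= ?subrr ?subr0 ?sub0r ?oppr1.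
Qed.

Lemma of_F2_monoid : monoid_morphism of_F2.
Proof.
by split=> // [[[|[|?]] ?] [[|[|?]] ?]] //=; rewrite /of_F2 /= ?mulr0 ?mul0r ?mulr1.
Qed.

End CharacteristicTwo.

Lemma F2_char2 : (1 + 1 = 0 :> 'F_2)%R.
Proof. by apply/eqP. Qed.

Lemma mpoly_char2 a : (1 + 1 = 0 :> {mpoly 'F_2[a]})%R.
Proof. by rewrite -mpolyC1 -mpolyCD F2_char2. Qed.

Section PolynomialSemantics.
Local Open Scope ring_scope.
Variable R : comNzRingType.
Local Notation semP := (sem 0 1 +%R *%R).

Definition varX n (j : nat) : {mpoly R[n]} := if insub j is Some k then 'X_k else 0.

Lemma varX_ord n (k : 'I_n) : varX n k = 'X_k.
Proof. by rewrite /varX valK. Qed.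

Lemma comp_mpoly_sem k n b (F : n.-tuple {mpoly R[k]}) (t : term n b) i : (i < b)%N ->
  comp_mpoly F (semP t (varX n) i) = semP t (fun j => F`_j) i.
Proof.
move=> lt_ib; rewrite sem_rmorph; apply: sem_loc => // j lt_jn /=.
by rewrite -[j]/(nat_of_ord (Ordinal lt_jn)) varX_ord comp_mpolyXU -tnth_nth.
Qed.

End PolynomialSemantics.

Arguments varX {R}.
Arguments varX_ord {R n}.

Local Notation semF2 a := (sem (0 : {mpoly 'F_2[a]})%R 1%R +%R *%R).

Lemma interp_sem a b (t : term a b) (i : 'I_b) : tnth (interp t) i = semF2 a t (varX a) i.
Proof.
elim: t i => /=.
- by move=> n i; rewrite tnth_mktuple varX_ord.
- move=> a' b' i; rewrite tnth_mktuple.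
  by case: splitP => [j -> | k ->]; rewrite -varX_ord //= addKn.
- by case.
- by move=> [[|[|?]] ?] //=; rewrite -(varX_ord (ord0 : 'I_1)).
- by move=> [[|?] ?].
- move=> [[|?] ?] //=.
  by rewrite -(varX_ord (ord0 : 'I_2)) -(varX_ord (ord_max : 'I_2)).
- by move=> [[|?] ?].
- move=> [[|?] ?] //=.
  by rewrite -(varX_ord (ord0 : 'I_2)) -(varX_ord (ord_max : 'I_2)).
- move=> a' b' c f IHf g IHg i.
  rewrite tnth_mktuple IHg comp_mpoly_sem //.
  by apply: sem_loc => // j lt_jb; rewrite -[j]/(nat_of_ord (Ordinal lt_jb)) -tnth_nth IHf.
move=> a' b' c d f IHf g IHg i.
rewrite (tnth_nth 0%R) /= nth_cat size_map size_tuple.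
case: ltnP => [lt_ib | le_bi].
  rewrite (nth_map 0%R) ?size_tuple // -(tnth_nth 0%R _ (Ordinal lt_ib)) IHf comp_mpoly_sem //.
  apply: sem_loc => // j lt_ja.
  by rewrite -[j]/(nat_of_ord (Ordinal lt_ja)) -tnth_nth tnth_mktuple -varX_ord.
have lt_id : (i - b' < d)%N by have := ltn_ord i; lia.
rewrite (nth_map 0%R) ?size_tuple // -(tnth_nth 0%R _ (Ordinal lt_id)) IHg comp_mpoly_sem //.
apply: sem_loc => // j lt_jc.
by rewrite -[j]/(nat_of_ord (Ordinal lt_jc)) -tnth_nth tnth_mktuple -varX_ord.
Qed.

(** * The ring of terms a -> 1 modulo A *)

(* Classical equality and choice on terms, only used to quotient by [eqA]. *)
HB.instance Definition _ a b := gen_eqMixin (term a b).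
HB.instance Definition _ a b := gen_choiceMixin (term a b).

Definition eqAb a b : rel (term a b) := fun t u => `[< eqA t u >].

Lemma eqAb_refl a b : reflexive (@eqAb a b).
Proof. by move=> t; apply/asboolP. Qed.

Lemma eqAb_sym a b : ssrbool.symmetric (@eqAb a b).
Proof. by move=> t u; apply/asboolP/asboolP => /eqA_sym. Qed.

Lemma eqAb_trans a b : transitive (@eqAb a b).
Proof. by move=> u t w /asboolP tu /asboolP uw; apply/asboolP/(eqA_trans tu uw). Qed.

Canonical eqA_equiv a b :=
  EquivRel (@eqAb a b) (@eqAb_refl a b) (@eqAb_sym a b) (@eqAb_trans a b).

Local Open Scope quotient_scope.

Definition qterm a := {eq_quot (@eqAb a 1)}.
HB.instance Definition _ a : EqQuotient _ (@eqAb a 1) (qterm a) := EqQuotient.on (qterm a).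
HB.instance Definition _ a := Choice.on (qterm a).

Lemma qterm_eqP a (t u : term a 1) : \pi_(qterm a) t = \pi u <-> eqA t u.
Proof.
have /(_ t u) pi_eqAb := @eqquotP _ (@eqAb a 1) (qterm a).
by split=> [/pi_eqAb /asboolP | /asboolP /pi_eqAb].
Qed.

Lemma eqA_repr_pi a (t : term a 1) : eqA (repr (\pi_(qterm a) t)) t.
Proof. by apply/qterm_eqP; rewrite reprK. Qed.

Section QTermOperations.
Variable a : nat.
Local Notation Q := (qterm a).

Definition qadd (x y : Q) : Q := \pi_Q (Tcomp (pair2 (repr x) (repr y)) Tadd).
Definition qmul (x y : Q) : Q := \pi_Q (Tcomp (pair2 (repr x) (repr y)) Tand).
Definition qzero : Q := \pi_Q (Tcomp (discardn a) Tzero).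
Definition qone : Q := \pi_Q (Tcomp (discardn a) Tone).
Definition qproj j : Q := \pi_Q (proj a j).

Lemma qaddE u v : qadd (\pi u) (\pi v) = \pi_Q (Tcomp (pair2 u v) Tadd).
Proof. by apply/qterm_eqP; rewrite !eqA_repr_pi. Qed.

Lemma qmulE u v : qmul (\pi u) (\pi v) = \pi_Q (Tcomp (pair2 u v) Tand).
Proof. by apply/qterm_eqP; rewrite !eqA_repr_pi. Qed.

End QTermOperations.

Notation semQ a := (sem (qzero a) (qone a) (@qadd a) (@qmul a)).

Section Precomposition.
Variables (c a : nat) (k : term c a).

Definition qcomp (x : qterm a) : qterm c := \pi_(qterm c) (Tcomp k (repr x)).

Lemma qcompE u : qcomp (\pi_(qterm a) u) = \pi_(qterm c) (Tcomp k u).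
Proof. by apply/qterm_eqP; rewrite !eqA_repr_pi. Qed.

Lemma qcomp_add x y : qcomp (qadd x y) = qadd (qcomp x) (qcomp y).
Proof.
rewrite -(reprK x) -(reprK y) qaddE !qcompE qaddE.
by apply/qterm_eqP; rewrite -ssmc_compA comp_pair2.
Qed.

Lemma qcomp_mul x y : qcomp (qmul x y) = qmul (qcomp x) (qcomp y).
Proof.
rewrite -(reprK x) -(reprK y) qmulE !qcompE qmulE.
by apply/qterm_eqP; rewrite -ssmc_compA comp_pair2.
Qed.

Lemma qcomp_zero : qcomp (qzero a) = qzero c.
Proof. by rewrite qcompE; apply/qterm_eqP; rewrite -ssmc_compA A_discard_nat. Qed.

Lemma qcomp_one : qcomp (qone a) = qone c.
Proof. by rewrite qcompE; apply/qterm_eqP; rewrite -ssmc_compA A_discard_nat. Qed.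

Lemma qcomp_sem b (t : term a b) v i : qcomp (semQ a t v i) = semQ c t (qcomp \o v) i.
Proof.
apply: sem_morph; [exact: qcomp_zero | exact: qcomp_one | exact: qcomp_add | exact: qcomp_mul].
Qed.

End Precomposition.

Lemma pi_comp_proj a b (t : term a b) i : i < b ->
  \pi_(qterm a) (Tcomp t (proj b i)) = semQ a t (@qproj a) i.
Proof.
elim: t i.
- by move=> n i _; apply/qterm_eqP; rewrite ssmc_idl.
- move=> a' b' i lt_i /=; case: ltnP => [lt_ib | le_bi].
    by apply/qterm_eqP; apply: Tsym_proj_l.
  by rewrite -{1}(subnKC le_bi); apply/qterm_eqP; apply: Tsym_proj_r; lia.
- by [].
- move=> [|[|i]] // _; apply/qterm_eqP; rewrite proj10.
    exact: copy_counitr.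
  by rewrite -[proj 2 1]/(Ttens Tdiscard (proj 1 0)) proj10 copy_counitl.
- by move=> [|i] // _; apply/qterm_eqP; rewrite proj10 ssmc_idr ssmc_idl.
- move=> [|i] // _; rewrite [RHS]/= qaddE; apply/qterm_eqP.
  by rewrite proj10 pair2_proj ssmc_idr ssmc_idl.
- by move=> [|i] // _; apply/qterm_eqP; rewrite proj10 ssmc_idr ssmc_idl.
- move=> [|i] // _; rewrite [RHS]/= qmulE; apply/qterm_eqP.
  by rewrite proj10 pair2_proj ssmc_idr ssmc_idl.
- move=> a' b' c f IHf g IHg i lt_ic.
  have /qterm_eqP -> := ssmc_compA f g (proj c i).
  rewrite -qcompE IHg // qcomp_sem; apply: sem_loc => // j lt_jb.
  by rewrite /= qcompE IHf.
move=> a' b' c d f IHf g IHg i lt_i /=; case: ltnP => [lt_ib | le_bi].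
  have /qterm_eqP -> := Ttens_proj_l f g lt_ib.
  rewrite -qcompE IHf // qcomp_sem; apply: sem_loc => // j lt_ja.
  by rewrite /= qcompE; apply/qterm_eqP; apply: lproj_proj.
have /qterm_eqP := Ttens_proj_r f g (i - b'); rewrite subnKC // => ->.
have lt_id : i - b' < d by lia.
rewrite -qcompE IHg // qcomp_sem; apply: sem_loc => // j lt_jc.
by rewrite /= qcompE; apply/qterm_eqP; apply: rproj_proj.
Qed.

(* Evaluating at [v] is precomposition with the tupling of representatives
   of the [v j], which turns [qproj n j] into [v j]. *)
Lemma qterm_law n (l r : term n 1) : eqA l r ->
  forall a (v : nat -> qterm a), semQ a l v 0 = semQ a r v 0.
Proof.
move=> lr a v; pose k := tupling a n (fun j => repr (v j)).
have qcomp_qproj j : j < n -> qcomp k (qproj n j) = v j.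
  by move=> lt_jn; rewrite qcompE (proj2 (qterm_eqP _ _) (tupling_proj _ lt_jn)) reprK.
have sem_k (t : term n 1) : semQ a t v 0 = qcomp k (semQ n t (@qproj n) 0).
  by rewrite qcomp_sem; apply: sem_loc => // j /qcomp_qproj.
by rewrite !sem_k -!pi_comp_proj //; congr (qcomp k _); apply/qterm_eqP; rewrite lr.
Qed.

Section QTermRing.
Variable a : nat.
Local Notation law E x y z := (qterm_law E (nth x [:: x; y; z])).

Lemma qaddA : associative (@qadd a).
Proof. move=> x y z; exact: esym (law A_add_assoc x y z). Qed.

Lemma qaddC : commutative (@qadd a).
Proof. move=> x y; exact: (law A_add_comm y x x). Qed.

Lemma qadd0 : left_id (qzero a) (@qadd a).
Proof. move=> x; exact: (law A_add_unit x x x). Qed.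

Lemma qaddxx : left_inverse (qzero a) id (@qadd a).
Proof. move=> x; exact: (law A_copy_add x x x). Qed.

Lemma qmulA : associative (@qmul a).
Proof. move=> x y z; exact: esym (law A_and_assoc x y z). Qed.

Lemma qmulC : commutative (@qmul a).
Proof. move=> x y; exact: (law A_and_comm y x x). Qed.

Lemma qmul1 : left_id (qone a) (@qmul a).
Proof. move=> x; exact: (law A_and_unit x x x). Qed.

Lemma qmulDl : left_distributive (@qmul a) (@qadd a).
Proof.
move=> x y z; rewrite qmulC [LHS](law A_distr z x y).
by rewrite /= !(qmulC z).
Qed.

End QTermRing.

Lemma qone_neq0 a : qone a != qzero a.
Proof.
by apply/eqP => /qterm_eqP /(sem_sound F2_char2) /(_ (fun _ => 0%R) 0 (ltn0Sn 0)).
Qed.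

HB.instance Definition _ a :=
  GRing.isZmodule.Build (qterm a) (@qaddA a) (@qaddC a) (@qadd0 a) (@qaddxx a).
HB.instance Definition _ a := GRing.Zmodule_isComNzRing.Build (qterm a)
  (@qmulA a) (@qmulC a) (@qmul1 a) (@qmulDl a) (@qone_neq0 a).

Lemma qterm_char2 a : (1 + 1 = 0 :> qterm a)%R.
Proof. exact: qaddxx. Qed.

HB.instance Definition _ a :=
  GRing.isZmodMorphism.Build 'F_2 (qterm a) (@of_F2 (qterm a)) (of_F2_zmod (qterm_char2 a)).
HB.instance Definition _ a :=
  GRing.isMonoidMorphism.Build 'F_2 (qterm a) (@of_F2 (qterm a)) (of_F2_monoid (qterm a)).

Definition qterm_of_poly a : {mpoly 'F_2[a]} -> qterm a :=
  mmap (@of_F2 (qterm a)) (fun k : 'I_a => qproj a k).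
HB.instance Definition _ a := GRing.RMorphism.on (@qterm_of_poly a).

Lemma qterm_of_interp a b (t : term a b) (i : 'I_b) :
  qterm_of_poly (tnth (interp t) i) = \pi_(qterm a) (Tcomp t (proj b i)).
Proof.
rewrite interp_sem pi_comp_proj // sem_rmorph; apply: sem_loc => // j lt_ja.
by rewrite /= -[j]/(nat_of_ord (Ordinal lt_ja)) varX_ord /qterm_of_poly mmapX mmap1U.
Qed.

Theorem mainTheorem2 (a b : nat) (f g : term a b) :
  interp f = interp g <-> eqA f g.
Proof.
split=> fg.
- rewrite (tupling_eta f) (tupling_eta g); apply: eq_tupling => i lt_ib.
  by apply/qterm_eqP; rewrite -!(qterm_of_interp _ (Ordinal lt_ib)) fg.
apply: eq_from_tnth => i; rewrite !interp_sem.
exact: (sem_sound (mpoly_char2 a) fg).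
Qed.
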